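(* Let $a,b\in\mathbb{N}$ with $a\ge b$, let $T(a,b)$ be the classical Jacobi operator, fix $k\in\{0,1,\ldots,b-1\}$ and let $E_k$ be the eigenspace of $T(a,b)$ for the eigenvalue $(k+1)(k-a-b)$. Then $E_k$ is 2-dimensional and consists of rational functions. There are three distinct one-dimensional subspaces $L_2,L_3,L_4\subset E_k$ such that: every nonzero element of $L_2$ is a type 2 eigenfunction of index $k$ and degree $k-a-b$; every nonzero element of $L_3$ is a type 3 eigenfunction of index $a-k-1$ and degree $-k-1$; every nonzero element of $L_4$ is a type 4 eigenfunction of index $b-k-1$ and degree $-k-1$; and every element of $E_k\setminus(L_2\cup L_3\cup L_4)$ is a type 2 eigenfunction of index $a+b-k-1$ and degree $-k-1$.
   Context: $D=d/dx$; $T(a,b)=(x^2-1)\big(D^2+(\frac{a+1}{x-1}+\frac{b+1}{x+1})D\big)$. For a nonzero eigenfunction $\phi$ with $w=\phi'/\phi$ rational: its asymptotic type is 1 if $w$ is regular at $x=\pm1$, 2 if $w$ has poles at both $x=1$ and $x=-1$, 3 if it has a pole at $x=1$ but not at $x=-1$, 4 if it has a pole at $x=-1$ but not at $x=1$; its degree is $\lim_{x\to\infty}xw(x)$ (for rational $\phi$, degree of numerator minus degree of denominator); its index is $\deg\phi-d_\imath$ where $\imath$ is its type and $d_1=0$, $d_2=-a-b$, $d_3=-a$, $d_4=-b$. *)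

From mathcomp Require Import all_boot all_order all_algebra.
From mathcomp Require Import all_classical all_reals all_analysis.
Set Implicit Arguments. Unset Strict Implicit. Unset Printing Implicit Defensive.
Import Order.TTheory GRing.Theory Num.Theory.
Local Open Scope ring_scope.

Section Jacobi.
Variable R : realType.

(* Functions are considered on the open interval ]l, r[ (which avoids +-1). *)
Definition inI (l r x : R) : bool := (l < x) && (x < r).

Definition jacobi_eig (a b : nat) (lam l r : R) (f : R -> R) : Prop :=
  forall x, inI l r x ->
    derivable f x 1 /\ derivable (derive1 f) x 1 /\
    (x ^+ 2 - 1) * (derive1 (derive1 f) x
       + ((a.+1)%:R / (x - 1) + (b.+1)%:R / (x + 1)) * derive1 f x)
    = lam * f x.

Definition eqI (l r : R) (f g : R -> R) : Prop :=
  forall x, inI l r x -> f x = g x.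

Definition lin_indep (l r : R) (f g : R -> R) : Prop :=
  forall c1 c2 : R, eqI l r (fun x => c1 * f x + c2 * g x) (fun => 0) ->
    c1 = 0 /\ c2 = 0.

Definition rat_rep (l r : R) (f : R -> R) (p q : {poly R}) : Prop :=
  q != 0 /\ forall x, inI l r x -> q.[x] != 0 /\ f x = p.[x] / q.[x].

Definition regular_at (n d : {poly R}) (c : R) : Prop :=
  exists n' d' : {poly R}, d'.[c] != 0 /\ n * d' = n' * d.

(* w = phi'/phi for phi = p/q is the rational function wnum/wden *)
Definition wnum (p q : {poly R}) : {poly R} := deriv p * q - p * deriv q.
Definition wden (p q : {poly R}) : {poly R} := p * q.

Definition has_type (p q : {poly R}) (i : nat) : Prop :=
  let n := wnum p q in let d := wden p q in
  match i with
  | 1 => regular_at n d 1 /\ regular_at n d (-1)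
  | 2 => ~ regular_at n d 1 /\ ~ regular_at n d (-1)
  | 3 => ~ regular_at n d 1 /\ regular_at n d (-1)
  | 4 => regular_at n d 1 /\ ~ regular_at n d (-1)
  | _ => False
  end%N.

Definition rdeg (p q : {poly R}) : int := (size p)%:Z - (size q)%:Z.

End Jacobi.

Definition dtype (a b i : nat) : int :=
  match i with
  | 2 => - (a%:Z + b%:Z)
  | 3 => - a%:Z
  | 4 => - b%:Z
  | _ => 0
  end%N.

Definition typed_eigenfunction (R : realType) (a b : nat) (lam l r : R)
    (f : R -> R) (i : nat) (m delta : int) : Prop :=
  jacobi_eig a b lam l r f /\ (exists x, inI l r x /\ f x != 0) /\
  exists p q : {poly R}, rat_rep l r f p q /\ has_type p q i /\
    rdeg p q = delta /\ rdeg p q - dtype a b i = m.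

From mathcomp Require Import all_boot all_order all_algebra.
From mathcomp Require Import all_classical all_reals all_analysis.
From mathcomp Require Import ring lra zify.
Import Order.TTheory GRing.Theory Num.Theory.
Import numFieldNormedType.Exports.
Local Open Scope ring_scope.

(* Writing an eigenfunction as N / ((x-1)^a (x+1)^b) turns T(a,b) f = lam f into a
   polynomial equation Lnum N = 0.  In the variable x - s (s = 1 or -1) the
   coefficients of a solution satisfy a two-term recurrence whose local exponents are
   0 and a at 1, 0 and b at -1, while at infinity a nonzero solution has degree k or
   a + b - k - 1.  Starting the recurrence at the nonzero exponent gives solutions
   N4 = (x-1)^a Q4 and N3 = (x+1)^b Q3 of degree a + b - k - 1 with Q4(1) = Q3(-1) = 1,
   and the combination N2 of them that kills the leading term has degree k.
   By Abel's identity (x-1)^(a+1) (x+1)^(b+1) W is constant for the Wronskian W of two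
   eigenfunctions; for N4 and N3 divided by (x-1)^a (x+1)^b it is a polynomial not
   vanishing at 1, so these two functions span E_k.  Finally, for P(1) P(-1) <> 0, phi'/phi of
   P / ((x-1)^al (x+1)^be) has a pole at 1 iff al > 0 and at -1 iff be > 0, which
   determines the types; degrees and indices are read off from deg P. *)

Section RationalFunctions.
Variable R : realType.
Implicit Types (N D : {poly R}) (x : R).

Lemma is_derive_poly_div N D x : D.[x] != 0 ->
  is_derive x 1 (fun y => N.[y] / D.[y]) ((wnum N D).[x] / (D * D).[x]).
Proof.
move=> Dx.
have H := is_deriveM (is_derive_poly N x) (is_deriveV Dx (is_derive_poly D x)).
have -> : (fun y => N.[y] / D.[y]) = horner N * (fun y => D.[y]^-1) by apply/funext.
apply: is_derive_eq H _; rewrite /wnum !hornerE /GRing.scale /=.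
by field.
Qed.

Lemma is_derive2_poly_div N D x :
  (\forall y \near x, D.[y] != 0) -> D.[x] != 0 ->
  is_derive x 1 (derive1 (fun y => N.[y] / D.[y]))
    ((wnum (wnum N D) (D * D)).[x] / ((D * D) * (D * D)).[x]).
Proof.
move=> D_near Dx.
apply: (@near_eq_is_derive _ _ _ (fun y => (wnum N D).[y] / (D * D).[y])).
  near=> y.
  have Dy : D.[y] != 0 by near: y.
  have [_ D_eq] := is_derive_poly_div N D y Dy.
  by rewrite derive1E D_eq.
by apply: is_derive_poly_div; rewrite hornerM mulf_neq0.
Unshelve. all: by end_near.
Qed.

Lemma poly_eq0_itv (l r : R) (p : {poly R}) : l < r ->
  (forall x, inI l r x -> p.[x] = 0) -> p = 0.
Proof.
move=> lr p_itv; apply: contraTeq isT => p0.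
pose u i := r - (r - l) / (i.+2)%:R.
have lr0 : 0 < r - l by rewrite subr_gt0.
have u_inj : injective u.
  move=> i j /addrI /oppr_inj /(mulfI (lt0r_neq0 lr0)) /invr_inj /eqP.
  by rewrite eqr_nat => /eqP [].
have u_itv i : inI l r (u i).
  have i2 : 2 <= (i.+2)%:R :> R by rewrite (ler_nat R 2 i.+2).
  have h1 : 0 < (r - l) / (i.+2)%:R by rewrite divr_gt0 ?ltr0n.
  have h2 : (r - l) / (i.+2)%:R < r - l by rewrite ltr_pdivrMr ?ltr0n // ltr_pMr //; lra.
  by rewrite /inI /u; move: h1 h2; set d := (r - l) / _ => h1 h2; apply/andP; split; lra.
have roots : all (root p) (mkseq u (size p)).
  by apply/allP => x /mapP[i _ ->]; rewrite /root p_itv.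
have := max_poly_roots p0 roots (mkseq_uniq _ u_inj).
by rewrite size_mkseq ltnn.
Qed.

Lemma is_derive0_cst_itv (F : R -> R) (l r : R) :
  (forall x, inI l r x -> is_derive x 1 F 0) ->
  forall x y, inI l r x -> inI l r y -> F x = F y.
Proof.
move=> F'0.
suff le_cst x y : x <= y -> inI l r x -> inI l r y -> F x = F y.
  move=> x y Ix Iy; case: (leP x y) => xy; first exact: le_cst.
  by apply/esym/le_cst => //; exact: ltW.
move=> xy Ix Iy.
have sub z : x <= z -> z <= y -> inI l r z.
  by move: Ix Iy; rewrite /inI => /andP[lx xr] /andP[ly yr] xz zy; apply/andP; split; lra.
have F'0_xy z : z \in `]x, y[ -> is_derive z 1 F ((fun=> 0) z).
  by rewrite in_itv /= => /andP[xz zy]; apply: F'0; apply: sub; exact: ltW.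
have F_cont : {within `[x, y], continuous F}%classic.
  apply: continuous_subspace_itv => z; rewrite in_itv /= => /andP[xz zy].
  have [dz _] := F'0 z (sub z xz zy).
  exact/differentiable_continuous/derivable1_diffP.
have [c _] := MVT_segment xy F'0_xy F_cont.
by rewrite mul0r => /eqP; rewrite subr_eq0 => /eqP.
Qed.

Lemma regular_atM (h n d : {poly R}) c : h != 0 ->
  regular_at (h * n) (h * d) c <-> regular_at n d c.
Proof.
move=> h0; split => -[n' [d' [d'c nd]]]; exists n', d'; split => //.
  by apply: (mulfI h0); rewrite mulrA nd; ring.
by rewrite -mulrA nd; ring.
Qed.

Lemma regular_at_nonroot (n d : {poly R}) c : d.[c] != 0 -> regular_at n d c.
Proof. by exists n, d. Qed.

Lemma not_regular_at (n d : {poly R}) c : n.[c] != 0 -> d.[c] = 0 ->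
  ~ regular_at n d c.
Proof.
move=> nc dc [n' [d' [d'c /(congr1 (horner^~ c))]]].
rewrite /= !hornerM dc mulr0 => /eqP.
by rewrite mulf_eq0 (negPf nc) (negPf d'c).
Qed.

End RationalFunctions.
Arguments is_derive_poly_div {R} N {D x}.
Arguments is_derive2_poly_div {R} N {D x}.
Arguments regular_atM {R}.
Arguments poly_eq0_itv {R l r p}.
Arguments regular_at_nonroot {R}.
Arguments not_regular_at {R}.

Section PlusMinusOne.
Variable R : realType.

Definition Xm1 : {poly R} := 'X - 1%:P.
Definition Xp1 : {poly R} := 'X - (-1)%:P.
Definition den (al be : nat) : {poly R} := Xm1 ^+ al * Xp1 ^+ be.

Lemma hornerXm1 x : Xm1.[x] = x - 1. Proof. by rewrite /Xm1 !hornerE. Qed.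
Lemma hornerXp1 x : Xp1.[x] = x + 1. Proof. by rewrite /Xp1 !hornerE opprK. Qed.

Lemma itv_avoid_pm1 (l r : R) : r <= -1 \/ (-1 <= l /\ r <= 1) \/ 1 <= l ->
  forall x, inI l r x -> x != 1 /\ x != -1.
Proof.
move=> lr x /andP[lx xr].
by split; apply/eqP => ex; rewrite ex in lx xr; case: lr => [|[[]|]]; lra.
Qed.

Lemma Xm1_neq0 : Xm1 != 0. Proof. by rewrite polyXsubC_eq0. Qed.
Lemma Xp1_neq0 : Xp1 != 0. Proof. by rewrite polyXsubC_eq0. Qed.

Lemma den_neq0 al be : den al be != 0.
Proof. by rewrite mulf_neq0 // expf_neq0 ?Xm1_neq0 ?Xp1_neq0. Qed.

Lemma horner_den_neq0 al be x : x != 1 -> x != -1 -> (den al be).[x] != 0.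
Proof.
move=> x1 x2; rewrite hornerM !horner_exp hornerXm1 hornerXp1.
by rewrite mulf_neq0 // expf_neq0 // ?subr_eq0 // -[1]opprK subr_eq0.
Qed.

Lemma size_den al be : size (den al be) = (al + be).+1.
Proof.
rewrite size_Mmonic ?expf_neq0 ?Xm1_neq0 ?monic_exp ?monicXsubC //.
by rewrite /Xm1 /Xp1 !size_exp_XsubC; lia.
Qed.

Lemma coprimep_Xm1_Xp1 m n : coprimep (Xm1 ^+ m) (Xp1 ^+ n).
Proof.
apply/coprimep_expl/coprimep_expr; rewrite /Xp1 coprimep_XsubC /root -/Xm1.
by rewrite hornerXm1 -opprD oppr_eq0 -(natrD _ 1 1) pnatr_eq0.
Qed.

Lemma deriv_pow_mul (p : {poly R}) n : p ^+ n.-1 * p *+ n = p ^+ n *+ n.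
Proof. by case: n => [|n]; rewrite ?mulr0n // -exprSr. Qed.

Lemma deriv_den m n :
  (den m n)^`() * (Xm1 * Xp1) = den m n * (m%:R *: Xp1 + n%:R *: Xm1).
Proof.
rewrite /den derivM !deriv_exp /Xm1 /Xp1 !derivXsubC !mul1r.
set U := 'X - 1%:P; set V := 'X - (-1)%:P.
have -> : (U ^+ m.-1 *+ m * V ^+ n + U ^+ m * (V ^+ n.-1 *+ n)) * (U * V)
   = (U ^+ m.-1 * U *+ m) * V ^+ n * V + (V ^+ n.-1 * V *+ n) * U ^+ m * U by ring.
by rewrite !deriv_pow_mul -!mul_polyC; ring.
Qed.

Lemma horner_deriv_den m n x : (den m n)^`().[x] * ((x - 1) * (x + 1))
  = (den m n).[x] * (m%:R * (x + 1) + n%:R * (x - 1)).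
Proof.
have := congr1 (horner^~ x) (deriv_den m n); rewrite /=.
rewrite [(_ * (Xm1 * Xp1)).[x]]hornerM [(den m n * _).[x]]hornerM [(Xm1 * Xp1).[x]]hornerM.
rewrite hornerXm1 hornerXp1 [(_ + _).[x]]hornerD !hornerZ.
by rewrite hornerXm1 hornerXp1.
Qed.

End PlusMinusOne.
Arguments Xm1 {R}.
Arguments Xp1 {R}.
Arguments den {R}.
Arguments horner_den_neq0 {R} al be {x}.
Arguments deriv_den {R}.
Arguments den_neq0 {R}.
Arguments horner_deriv_den {R}.

Section JacobiNumerator.
Variable R : realType.
Variables a b k : nat.

Definition lam : R := (k.+1)%:R * (k%:R - a%:R - b%:R).
Definition nlam : R := k%:R * (k%:R + 1 - a%:R - b%:R).

Definition Lnum (N : {poly R}) : {poly R} :=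
  ('X^2 - 1) * N^`()^`() + ((2 - a%:R - b%:R) *: 'X + (b%:R - a%:R)%:P) * N^`()
  - nlam *: N.

Lemma LnumD (N M : {poly R}) : Lnum (N + M) = Lnum N + Lnum M.
Proof. by rewrite /Lnum !derivD -!mul_polyC; ring. Qed.

Lemma LnumZ c (N : {poly R}) : Lnum (c *: N) = c *: Lnum N.
Proof. by rewrite /Lnum !derivZ -!mul_polyC; ring. Qed.

Lemma Lnum_scale c (N : {poly R}) : Lnum N = 0 -> Lnum (c *: N) = 0.
Proof. by move=> LN; rewrite LnumZ LN scaler0. Qed.

Lemma jacobi_eq_of_Lnum (N D : {poly R}) (x : R) : x != 1 -> x != -1 -> D.[x] != 0 ->
  Lnum N = 0 -> D^`() * (Xm1 * Xp1) = D * (a%:R *: Xp1 + b%:R *: Xm1) ->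
  (x ^+ 2 - 1) * ((wnum (wnum N D) (D * D)).[x] / ((D * D) * (D * D)).[x]
    + ((a.+1)%:R / (x - 1) + (b.+1)%:R / (x + 1)) * ((wnum N D).[x] / (D * D).[x]))
  = lam * (N.[x] / D.[x]).
Proof.
move=> x1 x2 Dx /(congr1 (horner^~ x)) LN /[dup] /(congr1 (horner^~ x)) LD1.
move=> /(congr1 (fun p => (p^`()).[x])) LD2; move: Dx LN LD1 LD2 => /=.
rewrite /Lnum /wnum /Xm1 /Xp1.
rewrite !(derivM, derivB, derivD, derivXsubC, derivZ, derivC, derivX, derivXn, hornerE) /=.
set n2 := N^`()^`().[x]; set n1 := N^`().[x]; set n0 := N.[x].
set d2 := D^`()^`().[x]; set d1 := D^`().[x]; set d0 := D.[x].
clearbody n2 n1 n0 d2 d1 d0 => Dx LN LD1 LD2.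
rewrite ?opprK ?mul1r ?subr0 ?mulr1 in LD1 LD2.
have xm1 : x - 1 != 0 by rewrite subr_eq0.
have xp1 : x + 1 != 0 by rewrite -[1]opprK subr_eq0.
have x21 : x ^+ 2 - 1 = (x - 1) * (x + 1) by ring.
set S := a%:R * (x + 1) + b%:R * (x - 1) in LD1 LD2.
set c1 := (2 - a%:R - b%:R) * x + b%:R - a%:R in LN.
have e1 : d1 = d0 * S / ((x - 1) * (x + 1)) by rewrite -LD1; field; rewrite xm1 xp1.
have e2 : d2 = (d1 * S + d0 * (a%:R + b%:R) - d1 * (x + 1 + (x - 1))) / ((x - 1) * (x + 1)).
  by rewrite -LD2; field; rewrite xm1 xp1.
have e3 : n2 = (nlam * n0 - c1 * n1) / ((x - 1) * (x + 1)).
  move/eqP: LN; rewrite subr_eq0 => /eqP <-.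
  by rewrite x21; field; rewrite xm1 xp1.
by rewrite e3 e2 e1 x21 /S /c1 /lam /nlam; field; rewrite Dx xp1 xm1.
Qed.

End JacobiNumerator.
Arguments lam {R}.
Arguments nlam {R}.
Arguments Lnum {R}.

Section PolynomialSolutions.
Variable R : realType.
Variables a b k : nat.
Local Notation Lnum := (@Lnum R a b k).
Local Notation nlam := (@nlam R a b k).

Definition c0loc (s : R) : R := (2 - a%:R - b%:R) * s + b%:R - a%:R.

(* [Lnum] written in the variable y = x - s, for s = 1 or s = -1 *)
Definition Lloc (s : R) (M : {poly R}) : {poly R} :=
  ('X^2 + (2 * s) *: 'X) * M^`()^`() + ((2 - a%:R - b%:R) *: 'X + (c0loc s)%:P) * M^`()
  - nlam *: M.

Definition dcoef (j : nat) : R := j%:R * (j%:R - 1) + (2 - a%:R - b%:R) * j%:R - nlam.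
Definition ucoef (s : R) (j : nat) : R := 2 * s * j%:R * (j%:R - 1) + c0loc s * j%:R.

Lemma coef_Lloc s M j : (Lloc s M)`_j = M`_j * dcoef j + M`_j.+1 * ucoef s j.+1.
Proof.
rewrite /Lloc !mulrDl -!scalerAl !coefB !coefD !coefZ !coefCM coefXnM !coefXM.
rewrite /dcoef /ucoef; case: j => [|[|j]] /=; rewrite ?subn2 /= !coef_deriv /=.
all: set L := nlam; set C := c0loc s; ring.
Qed.

Lemma Lnum_comp s M : s ^+ 2 = 1 ->
  Lnum (M \Po ('X - s%:P)) = Lloc s M \Po ('X - s%:P).
Proof.
move=> s2; rewrite /Lnum /Lloc !(deriv_comp, derivXsubC, mulr1).
rewrite !comp_polyB !comp_polyD !comp_polyM !comp_polyD !comp_polyZ.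
rewrite !comp_polyX !comp_polyC comp_Xn_poly.
have -> : ('X - s%:P) ^+ 2 + (2 * s) *: ('X - s%:P) = 'X^2 - 1.
  have -> : (1 : {poly R}) = s%:P * s%:P by rewrite -polyCM -expr2 s2.
  by rewrite -!mul_polyC polyCM polyCMn polyC1; ring.
have -> : (2 - a%:R - b%:R) *: ('X - s%:P) + (c0loc s)%:P
          = (2 - a%:R - b%:R) *: 'X + (b%:R - a%:R)%:P.
  by rewrite -!mul_polyC /c0loc !(polyCD, polyCB, polyCM); ring.
by [].
Qed.

Lemma Lloc_eq0 s N : s ^+ 2 = 1 -> Lnum N = 0 -> Lloc s (N \Po ('X + s%:P)) = 0.
Proof.
move=> s2 LN.
have shiftK : ('X + s%:P) \Po ('X - s%:P) = 'X.
  by rewrite comp_polyD comp_polyX comp_polyC subrK.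
have unshiftK : ('X - s%:P) \Po ('X + s%:P) = 'X.
  by rewrite comp_polyB comp_polyX comp_polyC addrK.
set M := N \Po ('X + s%:P).
have -> : Lloc s M = (Lloc s M \Po ('X - s%:P)) \Po ('X + s%:P).
  by rewrite -comp_polyA unshiftK comp_polyXr.
by rewrite -Lnum_comp // -comp_polyA shiftK comp_polyXr LN comp_poly0.
Qed.

Lemma dcoef_factor j : dcoef j = (j%:R - k%:R) * (j%:R + k%:R + 1 - a%:R - b%:R).
Proof. by rewrite /dcoef /nlam; ring. Qed.

Lemma dcoef_eq0 j : dcoef j = 0 -> j = k \/ (j + k).+1 = (a + b)%N.
Proof.
rewrite dcoef_factor => /eqP; rewrite mulf_eq0 subr_eq0 eqr_nat => /orP[/eqP|]; first by left.
have -> : j%:R + k%:R + 1 - a%:R - b%:R = (j + k).+1%:R - (a + b)%:R :> R.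
  by rewrite -addn1 !natrD; ring.
by rewrite subr_eq0 eqr_nat => /eqP; right.
Qed.

Lemma degree_sol N : Lnum N = 0 -> N != 0 ->
  (size N).-1 = k \/ ((size N).-1 + k).+1 = (a + b)%N.
Proof.
move=> LN N0; apply: dcoef_eq0.
set M := N \Po ('X + 1%:P).
have sM : size M = size N by rewrite /M size_comp_poly2 // size_XaddC.
have lcM : M`_(size N).-1 != 0.
  by rewrite -sM -lead_coefE lead_coef_eq0 -size_poly_eq0 sM size_poly_eq0.
have := coef_Lloc 1 M (size N).-1.
rewrite Lloc_eq0 ?expr1n // coef0 prednK ?size_poly_gt0 //.
rewrite [M`_(size N)]nth_default ?sM // mul0r addr0 => /esym/eqP.
by rewrite mulf_eq0 (negPf lcM) => /eqP.
Qed.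

Section LocalExponent.
Variables (s : R) (e : nat).
Hypothesis s2 : s ^+ 2 = 1.
(* e is the nonzero local exponent at s: e = a at 1 and e = b at -1. *)
Hypothesis c0loc_s : c0loc s = s * (2 - 2 * e%:R).

Lemma ucoef_factor j : ucoef s j = 2 * s * j%:R * (j%:R - e%:R).
Proof. by rewrite /ucoef c0loc_s; ring. Qed.

Lemma ucoef_neq0 j : (0 < j)%N -> j != e -> ucoef s j != 0.
Proof.
have s0 : s != 0 by apply: contra_eq_neq s2 => ->; rewrite expr0n eq_sym oner_eq0.
move=> j0 je; rewrite ucoef_factor !mulf_neq0 ?pnatr_eq0 -?lt0n //.
by rewrite subr_eq0 eqr_nat.
Qed.

(* Below the local exponent e the recurrence forces the coefficients to vanish. *)
Lemma dvdp_sol N : Lnum N = 0 -> N.[s] = 0 -> ('X - s%:P) ^+ e %| N.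
Proof.
move=> LN Ns.
set M := N \Po ('X + s%:P).
have NM : N = M \Po ('X - s%:P).
  by rewrite /M -comp_polyA comp_polyD comp_polyX comp_polyC subrK comp_polyXr.
have LM : Lloc s M = 0 by exact: Lloc_eq0.
have M_small j : (j < e)%N -> M`_j = 0.
  elim: j => [|j IH] ltje; first by rewrite -horner_coef0 horner_comp !hornerE ?add0r.
  have := coef_Lloc s M j; rewrite LM coef0 IH 1?ltnW // mul0r add0r.
  have u0 : ucoef s j.+1 != 0 by apply: ucoef_neq0; lia.
  by move=> /esym/eqP; rewrite mulf_eq0 (negPf u0) orbF => /eqP.
set M2 := \poly_(i < size M) M`_(i + e).
have M_eq : M = 'X^e * M2.
  apply/polyP => j; rewrite coefXnM /M2 coef_poly.
  case: ltnP => hj; first by rewrite M_small.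
  case: ltnP => hj2; first by rewrite subnK.
  by rewrite nth_default // (leq_trans hj2) ?leq_subr.
by rewrite NM M_eq comp_polyM comp_Xn_poly dvdp_mulIl.
Qed.

Section Construction.
Hypothesis ltke : (k < e)%N.
Hypothesis ltekab : (e + k < a + b)%N.

Let n := (a + b - k.+1)%N.

(* [qcoef i] is the coefficient of y^(e+i) in the solution y^e Q(y) of [Lloc s M = 0]. *)
Fixpoint qcoef (i : nat) : R :=
  if i is i'.+1 then - qcoef i' * dcoef (i' + e) / ucoef s (i' + e).+1 else 1.

Lemma qcoef_neq0 i : (i <= n - e)%N -> qcoef i != 0.
Proof.
elim: i => [|i IH] lein /=; first by rewrite oner_eq0.
rewrite !mulf_neq0 ?invr_neq0 ?oppr_eq0 ?IH ?ucoef_neq0 //; try lia.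
by apply/eqP => /dcoef_eq0; lia.
Qed.

Lemma qcoef_eq0 i : (n - e < i)%N -> qcoef i = 0.
Proof.
elim: i => [//|i IH] ltni /=.
have [ltni'|eqni] := ltnP (n - e) i; first by rewrite IH // oppr0 !mul0r.
have -> : (i + e = n)%N by lia.
have -> : dcoef n = 0 by rewrite dcoef_factor /n natrB ?natrD; [ring | lia].
by rewrite !mulr0 mul0r.
Qed.

Let Q : {poly R} := \poly_(i < (n - e).+1) qcoef i.

Lemma size_Q : size Q = (n - e).+1.
Proof. by rewrite size_poly_eq // qcoef_neq0. Qed.

Lemma coef_XeQ j : ('X^e * Q)`_j = if (j < e)%N then 0 else qcoef (j - e).
Proof.
rewrite coefXnM coef_poly; case: ltnP => // leej.
by case: ltnP => // ltj; rewrite qcoef_eq0 //; lia.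
Qed.

Lemma Lloc_XeQ : Lloc s ('X^e * Q) = 0.
Proof.
apply/polyP => j; rewrite coef_Lloc !coef_XeQ coef0.
case: (ltngtP j.+1 e) => [ltje|ltej|eqje].
- by rewrite !mul0r addr0.
- have -> : (j.+1 - e = (j - e).+1)%N by lia.
  rewrite /= (_ : (j - e + e = j)%N); last by lia.
  have u0 : ucoef s j.+1 != 0 by apply: ucoef_neq0; lia.
  by field.
- by rewrite ucoef_factor eqje subrr !mulr0 mul0r add0r.
Qed.

Definition Qsol : {poly R} := Q \Po ('X - s%:P).

Lemma Lnum_sol : Lnum (('X - s%:P) ^+ e * Qsol) = 0.
Proof. by rewrite -comp_Xn_poly -comp_polyM Lnum_comp // Lloc_XeQ comp_polyC. Qed.

Lemma Qsol_at : Qsol.[s] = 1.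
Proof. by rewrite horner_comp !hornerE subrr horner_coef0 coef_poly. Qed.

Lemma size_Qsol : size Qsol = (a + b - k - e)%N.
Proof. by rewrite size_comp_poly2 ?size_XsubC // size_Q /n; lia. Qed.

End Construction.
End LocalExponent.
End PolynomialSolutions.
Arguments c0loc {R}.
Arguments Qsol {R}.
Arguments degree_sol {R a b k N}.
Arguments dvdp_sol {R a b k s e} s2 c0loc_s {N}.

Definition ratf (R : realType) (al be : nat) (N : {poly R}) (y : R) : R :=
  N.[y] / (den al be).[y].
Arguments ratf {R}.

Section RationalEigenfunctions.
Variable R : realType.
Variables (a b : nat) (l r : R).
Hypothesis ltlr : l < r.
Hypothesis avoid_pm1 : forall x, inI l r x -> x != 1 /\ x != -1.

Lemma jacobi_eig_ratf k (N : {poly R}) : Lnum a b k N = 0 ->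
  jacobi_eig a b (lam a b k) l r (ratf a b N).
Proof.
rewrite /ratf; move=> LN x Ix; have [x1 x2] := avoid_pm1 x Ix.
have D_near : \forall y \near x, (den a b).[y] != 0.
  have : x \in `]l, r[ by rewrite in_itv.
  move=> /near_in_itvoo; apply: filterS => y; rewrite in_itv /= => Iy.
  by have [y1 y2] := avoid_pm1 y Iy; apply: horner_den_neq0.
have Dx := horner_den_neq0 a b x1 x2.
have D1 := is_derive_poly_div N Dx.
have D2 := is_derive2_poly_div N D_near Dx.
split; first exact: ex_derive.
split; first exact: ex_derive.
rewrite [derive1 (derive1 _) x]derive1E (@derive_val _ _ _ _ _ _ _ D2).
rewrite [derive1 _ x]derive1E (@derive_val _ _ _ _ _ _ _ D1).
exact: jacobi_eq_of_Lnum x1 x2 Dx LN (deriv_den a b).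
Qed.

Lemma ratf_scale (c : R) (N : {poly R}) : (fun x => c * ratf a b N x) = ratf a b (c *: N).
Proof. by apply/funext => x; rewrite /ratf hornerZ mulrA. Qed.

Lemma ratf_eq0 N : (forall x, inI l r x -> ratf a b N x = 0) -> N = 0.
Proof.
move=> gN0; apply: (poly_eq0_itv ltlr) => x Ix; have [x1 x2] := avoid_pm1 x Ix.
move/eqP: (gN0 x Ix); rewrite /ratf mulf_eq0 invr_eq0.
by rewrite (negPf (horner_den_neq0 a b x1 x2)) orbF => /eqP.
Qed.

Lemma ratf_nonzero N : N != 0 -> exists x, inI l r x /\ ratf a b N x != 0.
Proof.
move=> N0; apply: contrapT => allz; move/eqP: N0; apply; apply: ratf_eq0 => x Ix.
by apply: contrapT => gx; apply: allz; exists x; split => //; apply/eqP.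
Qed.

Lemma lin_indep_ratf {N M s} : N.[s] != 0 -> M.[s] = 0 -> M != 0 ->
  lin_indep l r (ratf a b N) (ratf a b M).
Proof.
move=> Ns Ms M0 c1 c2 comb0.
have P0 : c1 *: N + c2 *: M = 0.
  by apply: ratf_eq0 => x Ix; rewrite -(comb0 x Ix) /ratf hornerD !hornerZ; ring.
have c10 : c1 = 0.
  move/(congr1 (horner^~ s))/eqP: P0; rewrite /= hornerD !hornerZ Ms mulr0 addr0 horner0.
  by rewrite mulf_eq0 (negPf Ns) orbF => /eqP.
by move: P0; rewrite c10 scale0r add0r => /eqP; rewrite scaler_eq0 (negPf M0) orbF => /eqP.
Qed.

Lemma ratf_ne0 (c : R) (N : {poly R}) : c != 0 -> N != 0 ->
  exists x, inI l r x /\ c * ratf a b N x != 0.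
Proof.
move=> c0 N0; have cN0 : c *: N != 0 by rewrite scaler_eq0 negb_or c0.
have [x [Ix gx]] := ratf_nonzero _ cN0.
by exists x; split => //; move: gx; rewrite /ratf hornerZ mulrA.
Qed.

Variable mu : R.
Local Notation E := (jacobi_eig a b mu l r).

Lemma typed_ratf F P al be i m delta :
  E F -> (exists x, inI l r x /\ F x != 0) -> eqI l r F (ratf al be P) ->
  has_type P (den al be) i -> (size P)%:Z - (al + be).+1%:Z = delta ->
  delta - dtype a b i = m -> typed_eigenfunction a b mu l r F i m delta.
Proof.
move=> EF nzF FP typeP sizeP indexP; do 2 split => //.
exists P, (den al be); split; last by rewrite /rdeg size_den sizeP.
split; first exact: den_neq0.
by move=> x Ix; have [x1 x2] := avoid_pm1 x Ix; rewrite horner_den_neq0 // (FP x Ix).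
Qed.

Definition wronsk (f g : R -> R) (y : R) : R :=
  (den a.+1 b.+1).[y] * (g y * derive1 f y - derive1 g y * f y).

(* Abel's identity: (x-1)^(a+1) (x+1)^(b+1) is the integrating factor of T(a,b). *)
Lemma is_derive_wronsk f g x : E f -> E g -> inI l r x -> is_derive x 1 (wronsk f g) 0.
Proof.
move=> Ef Eg Ix; have [x1 x2] := avoid_pm1 x Ix.
have [df [ddf Efx]] := Ef x Ix; have [dg [ddg Egx]] := Eg x Ix.
set M : {poly R} := den a.+1 b.+1.
have H := is_deriveM (is_derive_poly M x)
  (is_deriveB (is_deriveM (derivableP dg) (derivableP ddf))
              (is_deriveM (derivableP ddg) (derivableP df))).
have -> : wronsk f g = horner M * (g * derive1 f - derive1 g * f) by apply/funext.
apply: is_derive_eq H _; rewrite !fctE -!derive1E /GRing.scale /=.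
have := horner_deriv_den a.+1 b.+1 x; rewrite -/M.
move: Efx Egx.
set f0 := f x; set f1 := derive1 f x; set f2 := derive1 (derive1 f) x.
set g0 := g x; set g1 := derive1 g x; set g2 := derive1 (derive1 g) x.
set m0 := M.[x]; set m1 := M^`().[x].
clearbody f0 f1 f2 g0 g1 g2 m0 m1 => Efx Egx HM.
have xm1 : x - 1 != 0 by rewrite subr_eq0.
have xp1 : x + 1 != 0 by rewrite -[1]opprK subr_eq0.
have x21 : x ^+ 2 - 1 = (x - 1) * (x + 1) by ring.
rewrite x21 in Efx Egx.
set q := (a.+1)%:R / (x - 1) + (b.+1)%:R / (x + 1) in Efx Egx.
have e1 : m1 = m1 * ((x - 1) * (x + 1)) / ((x - 1) * (x + 1)).
  by field; rewrite xm1 xp1.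
have e2 : f2 = (x - 1) * (x + 1) * (f2 + q * f1) / ((x - 1) * (x + 1)) - q * f1.
  by field; rewrite xm1 xp1.
have e3 : g2 = (x - 1) * (x + 1) * (g2 + q * g1) / ((x - 1) * (x + 1)) - q * g1.
  by field; rewrite xm1 xp1.
rewrite HM in e1; rewrite Efx in e2; rewrite Egx in e3.
by rewrite e1 e2 e3 /q; field; rewrite xm1 xp1.
Qed.

Lemma wronsk_cst {f g x y} : E f -> E g -> inI l r x -> inI l r y ->
  wronsk f g x = wronsk f g y.
Proof. by move=> Ef Eg; apply: is_derive0_cst_itv => z; apply: is_derive_wronsk. Qed.

Lemma eigen_span f g h x0 : E f -> E g -> E h -> inI l r x0 -> wronsk h g x0 != 0 ->
  exists c1 c2 : R, eqI l r f (fun x => c1 * g x + c2 * h x).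
Proof.
move=> Ef Eg Eh Ix0 W0.
exists (- wronsk f h x0 / wronsk h g x0), (wronsk f g x0 / wronsk h g x0) => x Ix.
rewrite (wronsk_cst Ef Eh Ix0 Ix) (wronsk_cst Ef Eg Ix0 Ix) (wronsk_cst Eh Eg Ix0 Ix) in W0 *.
move: W0; rewrite /wronsk mulf_eq0 negb_or => /andP[M0 W0].
by field; rewrite M0 W0.
Qed.

Lemma wronsk_ratf (P Q : {poly R}) x : x != 1 -> x != -1 ->
  wronsk (ratf a b Q) (ratf a b P) x = ((P * Q^`() - P^`() * Q) * (Xm1 * Xp1)).[x] / (den a b).[x].
Proof.
rewrite /ratf; move=> x1 x2; have Dx := horner_den_neq0 a b x1 x2.
have [_ dQ] := is_derive_poly_div Q Dx; have [_ dP] := is_derive_poly_div P Dx.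
have den_succ : den a.+1 b.+1 = den a b * (Xm1 * Xp1) :> {poly R}.
  by rewrite /den !exprS; ring.
rewrite /wronsk !derive1E dQ dP den_succ /wnum.
move: Dx; set D : {poly R} := den a b; set UV : {poly R} := Xm1 * Xp1.
clearbody D UV => Dx; rewrite !(hornerM, hornerD, hornerN).
by field.
Qed.

End RationalEigenfunctions.
Arguments wronsk {R}.
Arguments jacobi_eig_ratf {R a b l r} avoid_pm1 {k N}.
Arguments ratf_scale {R a b}.
Arguments lin_indep_ratf {R a b l r} ltlr avoid_pm1 {N M s}.
Arguments ratf_ne0 {R a b l r} ltlr avoid_pm1 {c N}.
Arguments typed_ratf {R a b l r} avoid_pm1 {mu F} P al be {i m delta}.
Arguments wronsk_ratf {R a b} P Q {x}.
Arguments wronsk_cst {R a b l r} avoid_pm1 {mu f g x y}.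
Arguments eigen_span {R a b l r} avoid_pm1 {mu f g h x0}.

Section AsymptoticType.
Variable R : realType.
Variables (P : {poly R}) (al be : nat).
Hypotheses (P1 : P.[1] != 0) (Pm1 : P.[-1] != 0).

Let L : {poly R} := P^`() * (Xm1 * Xp1) - P * (al%:R *: Xp1 + be%:R *: Xm1).

(* After cancelling the common factor, w = phi'/phi is L / (P (x-1) (x+1)). *)
Lemma regular_at_logderiv_den c :
  regular_at (wnum P (den al be)) (wden P (den al be)) c <-> regular_at L (P * (Xm1 * Xp1)) c.
Proof.
have D0 : den al be != 0 :> {poly R} by exact: den_neq0.
have UV0 : Xm1 * Xp1 != 0 :> {poly R} by rewrite mulf_neq0 ?Xm1_neq0 ?Xp1_neq0.
have wnumE : Xm1 * Xp1 * wnum P (den al be) = den al be * L.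
  have dD := @deriv_den R al be; rewrite /wnum /L.
  set D : {poly R} := den al be; set S : {poly R} := _ *: Xp1 + _ in dD *.
  have -> : D * (P^`() * (Xm1 * Xp1) - P * S) = D * P^`() * (Xm1 * Xp1) - P * (D * S) by ring.
  by rewrite -dD; ring.
have wdenE : Xm1 * Xp1 * wden P (den al be) = den al be * (P * (Xm1 * Xp1)).
  by rewrite /wden; ring.
by rewrite -(regular_atM _ _ _ c UV0) wnumE wdenE; exact: regular_atM.
Qed.

Lemma horner_L x :
  L.[x] = P^`().[x] * ((x - 1) * (x + 1)) - P.[x] * (al%:R * (x + 1) + be%:R * (x - 1)).
Proof.
rewrite /L hornerD hornerN !hornerM hornerXm1 hornerXp1.
by rewrite hornerD !hornerZ hornerXm1 hornerXp1.
Qed.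

Lemma horner_PXm1Xp1 x : (P * (Xm1 * Xp1)).[x] = P.[x] * ((x - 1) * (x + 1)).
Proof. by rewrite !hornerM hornerXm1 hornerXp1. Qed.

Lemma regular_den_1 : regular_at (wnum P (den al be)) (wden P (den al be)) 1 <-> al = 0%N.
Proof.
rewrite regular_at_logderiv_den; split => [reg|al0].
  apply/eqP; apply: contraPT reg => al0; apply: not_regular_at.
    rewrite horner_L subrr !mul0r !mulr0 addr0 add0r oppr_eq0.
    by rewrite !mulf_neq0 // ?pnatr_eq0 // -(natrD _ 1 1) pnatr_eq0.
  by rewrite horner_PXm1Xp1 subrr mul0r mulr0.
have -> : L = Xm1 * (P^`() * Xp1 - be%:R *: P).
  by rewrite /L al0 scale0r add0r -!mul_polyC; ring.
rewrite (_ : P * (Xm1 * Xp1) = Xm1 * (P * Xp1)); last by ring.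
rewrite regular_atM ?Xm1_neq0 //; apply: regular_at_nonroot.
by rewrite hornerM hornerXp1 mulf_neq0 // -(natrD _ 1 1) pnatr_eq0.
Qed.

Lemma regular_den_m1 : regular_at (wnum P (den al be)) (wden P (den al be)) (-1) <-> be = 0%N.
Proof.
rewrite regular_at_logderiv_den; split => [reg|be0].
  apply/eqP; apply: contraPT reg => be0; apply: not_regular_at.
    rewrite horner_L addNr !mulr0 !add0r oppr_eq0.
    by rewrite !mulf_neq0 // ?pnatr_eq0 // -opprD oppr_eq0 -(natrD _ 1 1) pnatr_eq0.
  by rewrite horner_PXm1Xp1 addNr !mulr0.
have -> : L = Xp1 * (P^`() * Xm1 - al%:R *: P).
  by rewrite /L be0 scale0r addr0 -!mul_polyC; ring.
rewrite (_ : P * (Xm1 * Xp1) = Xp1 * (P * Xm1)); last by ring.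
rewrite regular_atM ?Xp1_neq0 //; apply: regular_at_nonroot.
by rewrite hornerM hornerXm1 mulf_neq0 // -opprD oppr_eq0 -(natrD _ 1 1) pnatr_eq0.
Qed.

End AsymptoticType.
Arguments regular_den_1 {R P} al be.
Arguments regular_den_m1 {R P} al be.

Section JacobiSolutions.
Variable R : realType.
Variables a b k : nat.
Hypothesis leba : (b <= a)%N.
Hypothesis ltkb : (k < b)%N.
Local Notation Lnum := (@Lnum R a b k).

(* [N_i / ((x-1)^a (x+1)^b)] spans the line L_i of the theorem. *)
Definition Q3 : {poly R} := Qsol a b k (-1) b.
Definition Q4 : {poly R} := Qsol a b k 1 a.
Definition N3 : {poly R} := Xp1 ^+ b * Q3.
Definition N4 : {poly R} := Xm1 ^+ a * Q4.

Lemma c0loc_m1 : c0loc a b (-1) = -1 * (2 - 2 * b%:R) :> R.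
Proof. by rewrite /c0loc; ring. Qed.
Lemma c0loc_1 : c0loc a b 1 = 1 * (2 - 2 * a%:R) :> R.
Proof. by rewrite /c0loc; ring. Qed.
Lemma sqrN1 : (-1) ^+ 2 = 1 :> R. Proof. by rewrite sqrrN expr1n. Qed.

Lemma Lnum_N3 : Lnum N3 = 0.
Proof. by apply: Lnum_sol; rewrite ?sqrN1 ?c0loc_m1 //; lia. Qed.
Lemma Lnum_N4 : Lnum N4 = 0.
Proof. by apply: Lnum_sol; rewrite ?expr1n ?c0loc_1 //; lia. Qed.

Lemma Q3_at_m1 : Q3.[-1] = 1. Proof. exact: Qsol_at. Qed.
Lemma Q4_at_1 : Q4.[1] = 1. Proof. exact: Qsol_at. Qed.
Lemma size_Q3 : size Q3 = (a - k)%N.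
Proof. by rewrite size_Qsol ?sqrN1 ?c0loc_m1 //; lia. Qed.
Lemma size_Q4 : size Q4 = (b - k)%N.
Proof. by rewrite size_Qsol ?expr1n ?c0loc_1 //; lia. Qed.

Lemma Q3_neq0 : Q3 != 0. Proof. by rewrite -size_poly_eq0 size_Q3; lia. Qed.
Lemma Q4_neq0 : Q4 != 0. Proof. by rewrite -size_poly_eq0 size_Q4; lia. Qed.

(* Vanishing at the other endpoint would force a factor of degree exceeding deg Q. *)
Lemma Q3_at_1 : Q3.[1] != 0.
Proof.
apply/negP => /eqP Q31.
have : Xm1 ^+ a %| N3.
  apply: (dvdp_sol (expr1n _ _) c0loc_1 Lnum_N3).
  by rewrite /N3 hornerM Q31 mulr0.
rewrite /N3 Gauss_dvdpr ?coprimep_Xm1_Xp1 // => /(dvdp_leq Q3_neq0).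
by rewrite size_Q3 /Xm1 size_exp_XsubC; lia.
Qed.

Lemma Q4_at_m1 : Q4.[-1] != 0.
Proof.
apply/negP => /eqP Q4m1.
have : Xp1 ^+ b %| N4.
  apply: (dvdp_sol sqrN1 c0loc_m1 Lnum_N4).
  by rewrite /N4 hornerM Q4m1 mulr0.
rewrite /N4 Gauss_dvdpr 1?coprimep_sym ?coprimep_Xm1_Xp1 // => /(dvdp_leq Q4_neq0).
by rewrite size_Q4 /Xp1 size_exp_XsubC; lia.
Qed.

Lemma N3_at_1 : N3.[1] != 0.
Proof.
by rewrite /N3 hornerM horner_exp hornerXp1 mulf_neq0 ?Q3_at_1 // expf_neq0.
Qed.
Lemma N3_at_m1 : N3.[-1] = 0.
Proof. by rewrite /N3 hornerM horner_exp hornerXp1 addNr expr0n gtn_eqF ?mul0r //; lia. Qed.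
Lemma N4_at_m1 : N4.[-1] != 0.
Proof.
by rewrite /N4 hornerM horner_exp hornerXm1 mulf_neq0 ?Q4_at_m1 // expf_neq0.
Qed.
Lemma N4_at_1 : N4.[1] = 0.
Proof. by rewrite /N4 hornerM horner_exp hornerXm1 subrr expr0n gtn_eqF ?mul0r //; lia. Qed.

Lemma N3_neq0 : N3 != 0. Proof. by apply: contraNneq N3_at_1 => ->; rewrite horner0. Qed.
Lemma N4_neq0 : N4 != 0. Proof. by apply: contraNneq N4_at_m1 => ->; rewrite horner0. Qed.

Lemma size_N3 : size N3 = (a + b - k)%N.
Proof.
rewrite /N3 mulrC size_Mmonic ?Q3_neq0 ?monic_exp ?monicXsubC //.
by rewrite size_Q3 /Xp1 size_exp_XsubC; lia.
Qed.
Lemma size_N4 : size N4 = (a + b - k)%N.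
Proof.
rewrite /N4 mulrC size_Mmonic ?Q4_neq0 ?monic_exp ?monicXsubC //.
by rewrite size_Q4 /Xm1 size_exp_XsubC; lia.
Qed.

Lemma lead_coef_N3 : lead_coef N3 = lead_coef Q3.
Proof. by rewrite /N3 mulrC lead_coef_Mmonic // monic_exp // monicXsubC. Qed.
Lemma lead_coef_N4 : lead_coef N4 = lead_coef Q4.
Proof. by rewrite /N4 mulrC lead_coef_Mmonic // monic_exp // monicXsubC. Qed.

Lemma coef_N3_top : N3`_(a + b - k).-1 = lead_coef Q3.
Proof. by rewrite -lead_coef_N3 lead_coefE size_N3. Qed.
Lemma coef_N4_top : N4`_(a + b - k).-1 = lead_coef Q4.
Proof. by rewrite -lead_coef_N4 lead_coefE size_N4. Qed.

Definition N2 : {poly R} := lead_coef Q4 *: N3 - lead_coef Q3 *: N4.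

Lemma Lnum_N2 : Lnum N2 = 0.
Proof. by rewrite /N2 LnumD -scaleNr !LnumZ Lnum_N3 Lnum_N4 !scaler0 addr0. Qed.

Lemma N2_at_1 : N2.[1] != 0.
Proof.
rewrite /N2 hornerD hornerN !hornerZ N4_at_1 mulr0 subr0 mulf_neq0 ?N3_at_1 //.
by rewrite lead_coef_eq0 Q4_neq0.
Qed.
Lemma N2_at_m1 : N2.[-1] != 0.
Proof.
rewrite /N2 hornerD hornerN !hornerZ N3_at_m1 mulr0 add0r oppr_eq0.
by rewrite mulf_neq0 ?N4_at_m1 // lead_coef_eq0 Q3_neq0.
Qed.
Lemma N2_neq0 : N2 != 0. Proof. by apply: contraNneq N2_at_1 => ->; rewrite horner0. Qed.

Lemma size_N2 : size N2 = k.+1.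
Proof.
have N2_pos : (0 < size N2)%N by rewrite size_poly_gt0 N2_neq0.
have [<-|degN2] := degree_sol Lnum_N2 N2_neq0; first by rewrite prednK.
have : lead_coef N2 != 0 by rewrite lead_coef_eq0 N2_neq0.
rewrite lead_coefE (_ : (size N2).-1 = (a + b - k).-1); last by lia.
by rewrite /N2 coefB !coefZ coef_N3_top coef_N4_top mulrC subrr eqxx.
Qed.

Definition W34 : {poly R} :=
  Xm1 * Q3 * (Q4^`() * Xp1 - b%:R *: Q4) - Xp1 * Q4 * (Q3^`() * Xm1 - a%:R *: Q3).

Lemma wronsk_N3_N4 : (N3 * N4^`() - N3^`() * N4) * (Xm1 * Xp1) = den a b * W34.
Proof.
rewrite /N3 /N4 /W34 /den !derivM !deriv_exp /Xm1 /Xp1 !derivXsubC !mul1r.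
set U := 'X - 1%:P; set V := 'X - (-1)%:P.
have -> : (V ^+ b * Q3 * (U ^+ a.-1 *+ a * Q4 + U ^+ a * Q4^`()) -
   (V ^+ b.-1 *+ b * Q3 + V ^+ b * Q3^`()) * (U ^+ a * Q4)) * (U * V)
  = V ^+ b * Q3 * Q4 * V * (U ^+ a.-1 * U *+ a) + V ^+ b * Q3 * U ^+ a * Q4^`() * U * V
    - (V ^+ b.-1 * V *+ b) * Q3 * U ^+ a * Q4 * U - V ^+ b * Q3^`() * U ^+ a * Q4 * U * V
  by ring.
by rewrite !deriv_pow_mul -!mul_polyC; ring.
Qed.

Lemma W34_at_1 : W34.[1] != 0.
Proof.
have -> : W34.[1] = 2 * a%:R * Q3.[1].
  rewrite /W34 hornerD hornerN !hornerM hornerXm1 hornerXp1.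
  rewrite subrr !mul0r add0r hornerD hornerN hornerZ hornerM hornerXm1 Q4_at_1.
  by rewrite subrr mulr0 add0r; ring.
by rewrite !mulf_neq0 ?Q3_at_1 // pnatr_eq0 -lt0n; lia.
Qed.

Lemma size_comb34 c1 c2 : c1 * lead_coef Q3 + c2 * lead_coef Q4 != 0 ->
  size (c1 *: N3 + c2 *: N4) = (a + b - k)%N.
Proof.
move=> lc0; apply/eqP; rewrite eqn_leq; apply/andP; split.
  rewrite (leq_trans (size_polyD _ _)) // geq_max.
  by rewrite !(leq_trans (size_scale_leq _ _)) ?size_N3 ?size_N4.
have top : (c1 *: N3 + c2 *: N4)`_(a + b - k).-1 != 0.
  by rewrite coefD !coefZ coef_N3_top coef_N4_top.
rewrite -(prednK (_ : 0 < a + b - k)%N); last by lia.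
by rewrite ltnNge; apply: contra top => ?; rewrite nth_default.
Qed.

Section OnInterval.
Variables l r : R.
Hypothesis ltlr : l < r.
Hypothesis avoid_pm1 : forall x, inI l r x -> x != 1 /\ x != -1.
Local Notation E := (jacobi_eig a b (lam a b k) l r).
Local Notation g := (@ratf R a b).

Lemma wronsk_ratf_N4_N3 {x} : inI l r x -> wronsk a b (g N4) (g N3) x = W34.[x].
Proof.
move=> Ix; have [x1 x2] := avoid_pm1 x Ix.
rewrite (wronsk_ratf _ _ x1 x2) wronsk_N3_N4 hornerM mulrC mulKf //.
exact: horner_den_neq0.
Qed.

(* The Wronskian of g N4 and g N3 is the polynomial W34: constant on ]l,r[,
   yet nonzero at 1. *)
Lemma eigen_span34 {f} : E f -> exists c1 c2 : R, eqI l r f (fun x => c1 * g N3 x + c2 * g N4 x).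
Proof.
move=> Ef; have Ix0 : inI l r ((l + r) / 2) by move: ltlr => ?; apply/andP; split; lra.
have E3 := jacobi_eig_ratf avoid_pm1 Lnum_N3; have E4 := jacobi_eig_ratf avoid_pm1 Lnum_N4.
apply: (eigen_span avoid_pm1 Ef E3 E4 Ix0); apply/negP => /eqP W0.
have : W34 = 0 :> {poly R}.
  apply: (poly_eq0_itv ltlr) => x Ix.
  by rewrite -(wronsk_ratf_N4_N3 Ix) (wronsk_cst avoid_pm1 E4 E3 Ix Ix0).
by move=> W34_0; move: W34_at_1; rewrite W34_0 horner0 eqxx.
Qed.

Lemma typed_L2 (c : R) : c != 0 -> typed_eigenfunction a b (lam a b k) l r
  (fun x => c * g N2 x) 2 k%:Z (k%:Z - a%:Z - b%:Z).
Proof.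
move=> c0; have P1 : (c *: N2).[1] != 0 by rewrite hornerZ mulf_neq0 ?N2_at_1.
have Pm1 : (c *: N2).[-1] != 0 by rewrite hornerZ mulf_neq0 ?N2_at_m1.
have [Hm1 Hm2] := (regular_den_1 a b P1, regular_den_m1 a b Pm1).
apply: (typed_ratf avoid_pm1 (c *: N2) a b).
- by rewrite ratf_scale; apply/(jacobi_eig_ratf avoid_pm1)/Lnum_scale/Lnum_N2.
- exact: (ratf_ne0 (a := a) (b := b) ltlr avoid_pm1 c0) N2_neq0.
- by move=> x _; rewrite /ratf hornerZ mulrA.
- by split; [move/Hm1 | move/Hm2]; lia.
- by rewrite size_scale // size_N2; lia.
- by rewrite /=; lia.
Qed.

Lemma typed_L3 (c : R) : c != 0 -> typed_eigenfunction a b (lam a b k) l r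
  (fun x => c * g N3 x) 3 (a%:Z - k%:Z - 1) (- k%:Z - 1).
Proof.
move=> c0; have P1 : (c *: Q3).[1] != 0 by rewrite hornerZ mulf_neq0 ?Q3_at_1.
have Pm1 : (c *: Q3).[-1] != 0 by rewrite hornerZ Q3_at_m1 mulr1.
have [H1 Hm1] := (regular_den_1 a 0 P1, regular_den_m1 a 0 Pm1).
apply: (typed_ratf avoid_pm1 (c *: Q3) a 0).
- by rewrite ratf_scale; apply/(jacobi_eig_ratf avoid_pm1)/Lnum_scale/Lnum_N3.
- exact: (ratf_ne0 (a := a) (b := b) ltlr avoid_pm1 c0) N3_neq0.
- move=> x Ix; have [x1 x2] := avoid_pm1 x Ix.
  move: (horner_den_neq0 a b x1 x2).
  rewrite /ratf /N3 /den hornerZ !hornerM expr0 -polyC1 hornerC mulr1.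
  by rewrite mulf_eq0 negb_or => /andP[u0 v0]; field; rewrite u0 v0.
- by split; [move/H1 | apply/Hm1]; lia.
- by rewrite size_scale // size_Q3; lia.
- by rewrite /=; lia.
Qed.

Lemma typed_L4 (c : R) : c != 0 -> typed_eigenfunction a b (lam a b k) l r
  (fun x => c * g N4 x) 4 (b%:Z - k%:Z - 1) (- k%:Z - 1).
Proof.
move=> c0; have P1 : (c *: Q4).[1] != 0 by rewrite hornerZ Q4_at_1 mulr1.
have Pm1 : (c *: Q4).[-1] != 0 by rewrite hornerZ mulf_neq0 ?Q4_at_m1.
have [H1 Hm1] := (regular_den_1 0 b P1, regular_den_m1 0 b Pm1).
apply: (typed_ratf avoid_pm1 (c *: Q4) 0 b).
- by rewrite ratf_scale; apply/(jacobi_eig_ratf avoid_pm1)/Lnum_scale/Lnum_N4.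
- exact: (ratf_ne0 (a := a) (b := b) ltlr avoid_pm1 c0) N4_neq0.
- move=> x Ix; have [x1 x2] := avoid_pm1 x Ix.
  move: (horner_den_neq0 a b x1 x2).
  rewrite /ratf /N4 /den hornerZ !hornerM expr0 -polyC1 hornerC mul1r.
  by rewrite mulf_eq0 negb_or => /andP[u0 v0]; field; rewrite u0 v0.
- by split; [apply/H1 | move/Hm1]; lia.
- by rewrite size_scale // size_Q4; lia.
- by rewrite /=; lia.
Qed.

Lemma typed_generic f : E f ->
  (forall c : R, ~ eqI l r f (fun x => c * g N2 x)) ->
  (forall c : R, ~ eqI l r f (fun x => c * g N3 x)) ->
  (forall c : R, ~ eqI l r f (fun x => c * g N4 x)) ->
  typed_eigenfunction a b (lam a b k) l r f 2 (a%:Z + b%:Z - k%:Z - 1) (- k%:Z - 1).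
Proof.
move=> Ef notL2 notL3 notL4; have [c1 [c2 fE]] := eigen_span34 Ef.
have fP x : inI l r x -> f x = g (c1 *: N3 + c2 *: N4) x.
  by move=> Ix; rewrite fE // /ratf hornerD !hornerZ mulrDl !mulrA.
have c10 : c1 != 0.
  by apply: contra_notN (notL4 c2) => /eqP c10 x Ix; rewrite fE // c10 mul0r add0r.
have c20 : c2 != 0.
  by apply: contra_notN (notL3 c1) => /eqP c20 x Ix; rewrite fE // c20 mul0r addr0.
have lc0 : c1 * lead_coef Q3 + c2 * lead_coef Q4 != 0.
  apply: contra_notN (notL2 (c1 / lead_coef Q4)) => /eqP lc0 x Ix.
  have lc4 : lead_coef Q4 != 0 by rewrite lead_coef_eq0 Q4_neq0.
  have c2E : c2 = - (c1 * lead_coef Q3) / lead_coef Q4.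
    by apply: (mulIf lc4); rewrite mulfVK // -[RHS]add0r -lc0; ring.
  rewrite fP // c2E /ratf /N2 !(hornerD, hornerN, hornerZ).
  have [x1 x2] := avoid_pm1 x Ix.
  by field; rewrite horner_den_neq0 // lc4.
have nz : exists x, inI l r x /\ f x != 0.
  apply: contrapT => allz; apply: (notL2 0) => x Ix; rewrite mul0r.
  by apply: contrapT => fx; apply: allz; exists x; split => //; apply/eqP.
set P := c1 *: N3 + c2 *: N4.
have P1 : P.[1] != 0 by rewrite hornerD !hornerZ N4_at_1 mulr0 addr0 mulf_neq0 ?N3_at_1.
have Pm1 : P.[-1] != 0 by rewrite hornerD !hornerZ N3_at_m1 mulr0 add0r mulf_neq0 ?N4_at_m1.
have [H1 Hm1] := (regular_den_1 a b P1, regular_den_m1 a b Pm1).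
apply: (typed_ratf avoid_pm1 P a b) => //.
- by split; [move/H1 | move/Hm1]; lia.
- by rewrite size_comb34 //; lia.
- by rewrite /=; lia.
Qed.

Lemma lin_indep_23 : lin_indep l r (g N2) (g N3).
Proof. exact: (lin_indep_ratf (a := a) (b := b) ltlr avoid_pm1 N2_at_m1 N3_at_m1 N3_neq0). Qed.
Lemma lin_indep_24 : lin_indep l r (g N2) (g N4).
Proof. exact: (lin_indep_ratf (a := a) (b := b) ltlr avoid_pm1 N2_at_1 N4_at_1 N4_neq0). Qed.
Lemma lin_indep_34 : lin_indep l r (g N3) (g N4).
Proof. exact: (lin_indep_ratf (a := a) (b := b) ltlr avoid_pm1 N3_at_1 N4_at_1 N4_neq0). Qed.

Lemma eigenspace_dim2 : exists f1 f2, E f1 /\ E f2 /\ lin_indep l r f1 f2 /\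
  forall f, E f -> exists c1 c2 : R, eqI l r f (fun x => c1 * f1 x + c2 * f2 x).
Proof.
exists (g N3), (g N4).
split; first exact: (jacobi_eig_ratf avoid_pm1 Lnum_N3).
split; first exact: (jacobi_eig_ratf avoid_pm1 Lnum_N4).
by split; [exact: lin_indep_34 | move=> f; exact: eigen_span34].
Qed.

Lemma eigenspace_rational f : E f -> exists p q : {poly R}, rat_rep l r f p q.
Proof.
move=> /eigen_span34[c1 [c2 fE]]; exists (c1 *: N3 + c2 *: N4), (den a b).
split=> [|x Ix]; first exact: den_neq0.
have [x1 x2] := avoid_pm1 x Ix; split; first exact: horner_den_neq0.
by rewrite fE // /ratf hornerD !hornerZ mulrDl !mulrA.
Qed.

End OnInterval.
End JacobiSolutions.
Arguments N2 {R}.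
Arguments N3 {R}.
Arguments N4 {R}.

Theorem mainTheorem20 (R : realType) (a b k : nat) (l r : R) :
  (b <= a)%N -> (k < b)%N -> l < r ->
  (r <= -1 \/ (-1 <= l /\ r <= 1) \/ 1 <= l) ->
  let lam : R := (k.+1)%:R * (k%:R - a%:R - b%:R) in
  let E := jacobi_eig a b lam l r in
  (* E_k is 2-dimensional *)
  (exists f1 f2, E f1 /\ E f2 /\ lin_indep l r f1 f2 /\
     forall f, E f -> exists c1 c2 : R,
       eqI l r f (fun x => c1 * f1 x + c2 * f2 x)) /\
  (* E_k consists of rational functions *)
  (forall f, E f -> exists p q : {poly R}, rat_rep l r f p q) /\
  (* three distinct lines L_i = span g_i *)
  (exists g2 g3 g4 : R -> R,
     [/\ E g2, E g3 & E g4] /\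
     [/\ lin_indep l r g2 g3, lin_indep l r g2 g4 & lin_indep l r g3 g4] /\
     (forall c : R, c != 0 -> typed_eigenfunction a b lam l r
        (fun x => c * g2 x) 2 k%:Z (k%:Z - a%:Z - b%:Z)) /\
     (forall c : R, c != 0 -> typed_eigenfunction a b lam l r
        (fun x => c * g3 x) 3 (a%:Z - k%:Z - 1) (- k%:Z - 1)) /\
     (forall c : R, c != 0 -> typed_eigenfunction a b lam l r
        (fun x => c * g4 x) 4 (b%:Z - k%:Z - 1) (- k%:Z - 1)) /\
     (forall f, E f ->
        (forall c : R, ~ eqI l r f (fun x => c * g2 x)) ->
        (forall c : R, ~ eqI l r f (fun x => c * g3 x)) ->
        (forall c : R, ~ eqI l r f (fun x => c * g4 x)) ->
        typed_eigenfunction a b lam l r f 2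
          (a%:Z + b%:Z - k%:Z - 1) (- k%:Z - 1))).
Proof.
move=> leba ltkb ltlr /itv_avoid_pm1 avoid lam' E.
split; first exact: eigenspace_dim2.
split; first exact: eigenspace_rational.
exists (ratf a b (N2 a b k)), (ratf a b (N3 a b k)), (ratf a b (N4 a b k)).
split; first by split; apply: (jacobi_eig_ratf avoid);
  [apply: Lnum_N2 | apply: Lnum_N3 | apply: Lnum_N4].
split; first by split; [apply: lin_indep_23 | apply: lin_indep_24 | apply: lin_indep_34].
split; first exact: typed_L2.
split; first exact: typed_L3.
split; first exact: typed_L4.
exact: typed_generic.
Qed.
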